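(* Let $\mathcal{M}\subseteq\mathbb{S}^n$. Then $\mathcal{S}(\mathcal{M})$ is rank-one generated if and only if for every nonzero $X\in\mathcal{S}(\mathcal{M})$ we have $\mathrm{range}(X)\cap\mathcal{E}(X,\mathcal{M})\neq\{0\}$.
   Context: $\mathbb{S}^n$ denotes real symmetric $n\times n$ matrices with $\langle A,B\rangle=\mathrm{tr}(AB)$, $\mathbb{S}^n_+$ the PSD cone. For $\mathcal{M}\subseteq\mathbb{S}^n$, $\mathcal{S}(\mathcal{M})=\{X\in\mathbb{S}^n_+:\langle M,X\rangle\ge0\ \forall M\in\mathcal{M}\}$, and for $X\in\mathcal{S}(\mathcal{M})$, $\mathcal{E}(X,\mathcal{M})=\{x\in\mathbb{R}^n: |x^\top Mx|\le\langle M,X\rangle\ \forall M\in\mathcal{M}\}$. A closed convex cone $\mathcal{S}\subseteq\mathbb{S}^n_+$ is rank-one generated (ROG) if $\mathcal{S}=\mathrm{conv}(\mathcal{S}\cap\{xx^\top:x\in\mathbb{R}^n\})$. *)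

From HB Require Import structures.
From mathcomp Require Import all_boot all_order all_algebra.
From mathcomp Require Import reals.
Set Implicit Arguments. Unset Strict Implicit. Unset Printing Implicit Defensive.
Import Order.TTheory GRing.Theory Num.Theory.
Local Open Scope ring_scope.

Section Defs.
Variables (R : realType) (n : nat).

Definition sym_mx (A : 'M[R]_n) : Prop := A^T = A.

Definition qform (A : 'M[R]_n) (x : 'cV[R]_n) : R := (x^T *m A *m x) ord0 ord0.

Definition inner (A B : 'M[R]_n) : R := \tr (A *m B).

Definition psd (X : 'M[R]_n) : Prop := sym_mx X /\ forall x, 0 <= qform X x.

Definition SM (Ms : 'M[R]_n -> Prop) (X : 'M[R]_n) : Prop :=
  psd X /\ forall M, Ms M -> 0 <= inner M X.

Definition EM (X : 'M[R]_n) (Ms : 'M[R]_n -> Prop) (x : 'cV[R]_n) : Prop :=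
  forall M, Ms M -> `|qform M x| <= inner M X.

Definition in_range (X : 'M[R]_n) (x : 'cV[R]_n) : Prop :=
  exists y : 'cV[R]_n, x = X *m y.

Definition rank_one (Y : 'M[R]_n) : Prop := exists x : 'cV[R]_n, Y = x *m x^T.

Definition conv (A : 'M[R]_n -> Prop) (X : 'M[R]_n) : Prop :=
  exists (k : nat) (lam : 'I_k -> R) (Y : 'I_k -> 'M[R]_n),
    (forall i, 0 <= lam i) /\ \sum_(i < k) lam i = 1 /\
    (forall i, A (Y i)) /\ X = \sum_(i < k) lam i *: Y i.

Definition ROG (S : 'M[R]_n -> Prop) : Prop :=
  forall X, S X <-> conv (fun Y => S Y /\ rank_one Y) X.

End Defs.

(* If X = sum_i l_i y_i y_i^T with every y_i y_i^T in S(M), a nonzero term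
   x x^T = l_i y_i y_i^T has x in range(X), because the kernel of the psd matrix X
   is orthogonal to x, and x in E(X,M), because |x^T M x| = <M, x x^T> <= <M, X>.
   Conversely, let x <> 0 lie in range(X) and E(X,M). Then D = x x^T is a two-sided
   feasible direction at X.  Walking from X along -D, and along +D unless D itself lies
   in S(M), up to the boundary of S(M) writes X as a positive combination of points Y, Z
   of S(M) (or of Y and D) at which D has stopped being feasible, while every feasible
   direction at Y or Z is still feasible at X.  Hence the dimension of the space of
   feasible directions drops, and induction on it (it is at most n^2) writes X as a sum
   of rank-one elements of S(M). *)

From HB Require Import structures.
From mathcomp Require Import all_boot all_order all_algebra.
From mathcomp Require Import reals boolp classical_sets.
From mathcomp Require Import ring lra.
(* Imported after [boolp], so that [EM] is E(X,M) and not excluded middle. *)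
Import Order.TTheory GRing.Theory Num.Theory.
Set Implicit Arguments. Unset Strict Implicit. Unset Printing Implicit Defensive.
Local Open Scope ring_scope.

Section QuadraticForms.
Variables (R : realType) (n : nat).
Implicit Types (A B M X : 'M[R]_n) (x y u v : 'cV[R]_n).

Definition bil A u v : R := (u^T *m A *m v) ord0 ord0.
Definition dot u v : R := (u^T *m v) ord0 ord0.

Lemma qformE A x : qform A x = bil A x x.
Proof. by []. Qed.

Lemma trmx11 (a : 'M[R]_1) : a^T ord0 ord0 = a ord0 ord0.
Proof. by rewrite mxE. Qed.

Lemma bilDl A u v w : bil A (u + w) v = bil A u v + bil A w v.
Proof. by rewrite /bil linearD /= !mulmxDl mxE. Qed.

Lemma bilDr A u v w : bil A u (v + w) = bil A u v + bil A u w.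
Proof. by rewrite /bil mulmxDr mxE. Qed.

Lemma bilZl A u v c : bil A (c *: u) v = c * bil A u v.
Proof. by rewrite /bil linearZ /= -!scalemxAl mxE. Qed.

Lemma bilZr A u v c : bil A u (c *: v) = c * bil A u v.
Proof. by rewrite /bil -scalemxAr mxE. Qed.

Lemma bilC A u v : sym_mx A -> bil A u v = bil A v u.
Proof.
by move=> sA; rewrite /bil -trmx11 !trmx_mul trmxK sA mulmxA.
Qed.

Lemma dotC u v : dot u v = dot v u.
Proof. by rewrite /dot -trmx11 trmx_mul trmxK. Qed.

Lemma dot_mulmx X y v : sym_mx X -> dot (X *m y) v = bil X y v.
Proof. by move=> sX; rewrite /dot /bil trmx_mul sX. Qed.

Lemma qformD A B x : qform (A + B) x = qform A x + qform B x.
Proof. by rewrite /qform mulmxDr mulmxDl mxE. Qed.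

Lemma qformZ c A x : qform (c *: A) x = c * qform A x.
Proof. by rewrite /qform -scalemxAr -scalemxAl mxE. Qed.

Lemma qformN A x : qform (- A) x = - qform A x.
Proof. by rewrite -scaleN1r qformZ mulN1r. Qed.

Lemma qformDZv A u v t : sym_mx A ->
  qform A (u + t *: v) = qform A u + 2 * t * bil A u v + t ^+ 2 * qform A v.
Proof.
by move=> sA; rewrite !qformE bilDl !bilDr !bilZl !bilZr (bilC v u) //; ring.
Qed.

Lemma qform_rank1 x v : qform (x *m x^T) v = dot x v ^+ 2.
Proof.
rewrite /qform mulmxA -mulmxA mxE big_ord1 -/(dot v x) -/(dot x v).
by rewrite dotC expr2.
Qed.

Lemma dot_gt0 x : x != 0 -> 0 < dot x x.
Proof.
move=> x_neq0; have [i xi] : exists i, x i ord0 != 0.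
  apply/existsP; apply: contraR x_neq0 => /existsPn x0.
  by apply/eqP/matrixP => i j; rewrite ord1 mxE; apply/eqP/negPn/x0.
rewrite /dot mxE (bigD1 i) //= mxE ltr_pwDl //.
  by rewrite lt_def mulf_neq0 //= -expr2 sqr_ge0.
by apply: sumr_ge0 => j _; rewrite mxE -expr2 sqr_ge0.
Qed.

Lemma innerD M A B : inner M (A + B) = inner M A + inner M B.
Proof. by rewrite /inner mulmxDr mxtraceD. Qed.

Lemma innerZ M c A : inner M (c *: A) = c * inner M A.
Proof. by rewrite /inner -scalemxAr mxtraceZ. Qed.

Lemma inner_rank1 M x : inner M (x *m x^T) = qform M x.
Proof. by rewrite /inner /qform mulmxA mxtrace_mulC mulmxA /mxtrace big_ord1. Qed.

Lemma sym_rank1 x : sym_mx (x *m x^T).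
Proof. by rewrite /sym_mx trmx_mul trmxK. Qed.

Lemma psd_rank1 x : psd (x *m x^T).
Proof. by split=> [|v]; [exact: sym_rank1 | rewrite qform_rank1 sqr_ge0]. Qed.

Lemma rank1Z c x : (c *: x) *m (c *: x)^T = c ^+ 2 *: (x *m x^T).
Proof. by rewrite linearZ /= -scalemxAl -scalemxAr scalerA expr2. Qed.

Lemma psd_cauchy_schwarz A u v : psd A -> bil A u v ^+ 2 <= qform A u * qform A v.
Proof.
case=> sA pA; set a := qform A u; set b := bil A u v; set c := qform A v.
have H t : 0 <= a + 2 * t * b + t ^+ 2 * c by rewrite -qformDZv.
have [c_gt0 | c_lt0 | c0] := ltrgt0P c.
- have := H (- b / c).
  have -> : a + 2 * (- b / c) * b + (- b / c) ^+ 2 * c = a - b ^+ 2 / c.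
    by field; rewrite gt_eqF.
  by rewrite subr_ge0 ler_pdivrMr // mulrC.
- by have := pA v; rewrite -/c leNgt c_lt0.
- have [-> | b_neq0] := eqVneq b 0; first by rewrite c0 expr0n mulr0.
  have := H (- (a + 1) / (2 * b)); rewrite c0 mulr0 addr0.
  have -> : a + 2 * (- (a + 1) / (2 * b)) * b = -1 by field.
  by rewrite ler0N1.
Qed.

End QuadraticForms.

Section Cone.
Variables (R : realType) (n : nat) (Ms : 'M[R]_n -> Prop).
Implicit Types (A B : 'M[R]_n).

Lemma psd0 : psd (0 : 'M[R]_n).
Proof. by split=> [|x]; rewrite /sym_mx ?trmx0 // /qform mulmx0 mul0mx mxE. Qed.

Lemma psdD A B : psd A -> psd B -> psd (A + B).
Proof.
case=> sA pA [sB pB]; split=> [|x]; first by rewrite /sym_mx linearD /= sA sB.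
by rewrite qformD addr_ge0.
Qed.

Lemma psdZ c A : 0 <= c -> psd A -> psd (c *: A).
Proof.
move=> c_ge0 [sA pA]; split=> [|x]; first by rewrite /sym_mx linearZ /= sA.
by rewrite qformZ mulr_ge0.
Qed.

Lemma SM0 : SM Ms 0.
Proof. by split=> [|M _]; [exact: psd0 | rewrite /inner mulmx0 mxtrace0]. Qed.

Lemma SMD A B : SM Ms A -> SM Ms B -> SM Ms (A + B).
Proof.
case=> pA iA [pB iB]; split=> [|M HM]; first exact: psdD.
by rewrite innerD addr_ge0 ?iA ?iB.
Qed.

Lemma SMZ c A : 0 <= c -> SM Ms A -> SM Ms (c *: A).
Proof.
move=> c_ge0 [pA iA]; split=> [|M HM]; first exact: psdZ.
by rewrite innerZ mulr_ge0 ?iA.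
Qed.

Lemma SM_sum (I : Type) (r : seq I) (P : pred I) (F : I -> 'M[R]_n) :
  (forall i, P i -> SM Ms (F i)) -> SM Ms (\sum_(i <- r | P i) F i).
Proof. by move=> SF; apply: big_ind => //; [exact: SM0 | exact: SMD]. Qed.

End Cone.

Section FeasibleDirections.
Variables (R : realType) (n : nat) (Ms : 'M[R]_n -> Prop).
Implicit Types (D E W X Y : 'M[R]_n).

Definition feasible_dir X E :=
  exists2 e : R, 0 < e & forall t, `|t| <= e -> SM Ms (X + t *: E).

Lemma feasible_dir0 X : SM Ms X -> feasible_dir X 0.
Proof. by move=> SX; exists 1 => // t _; rewrite scaler0 addr0. Qed.

Lemma feasible_dirZ X E c : feasible_dir X E -> feasible_dir X (c *: E).
Proof.
case=> e e_gt0 XE; exists (e / (`|c| + 1)) => [|t t_le].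
  by rewrite divr_gt0 // ltr_pwDr.
rewrite scalerA; apply: XE; rewrite normrM.
have : `|t| * (`|c| + 1) <= e by rewrite -ler_pdivlMr // ltr_pwDr.
by have := normr_ge0 t; nra.
Qed.

Lemma feasible_dirD X E1 E2 :
  feasible_dir X E1 -> feasible_dir X E2 -> feasible_dir X (E1 + E2).
Proof.
case=> e1 e1_gt0 XE1 [e2 e2_gt0 XE2].
exists (Num.min e1 e2 / 2) => [|t t_le]; first by rewrite divr_gt0 // lt_min e1_gt0.
have t2_le : `|2 * t| <= Num.min e1 e2.
  by rewrite normrM ger0_norm // -ler_pdivlMl // mulrC.
have S1 : SM Ms (X + (2 * t) *: E1) by apply: XE1; rewrite (le_trans t2_le) // ge_min lexx.
have S2 : SM Ms (X + (2 * t) *: E2).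
  by apply: XE2; rewrite (le_trans t2_le) // ge_min lexx orbT.
have -> : X + t *: (E1 + E2) = 2^-1 *: (X + (2 * t) *: E1) + 2^-1 *: (X + (2 * t) *: E2).
  by apply/matrixP => i j; rewrite !mxE; field.
by apply: SMD; apply: SMZ; rewrite ?invr_ge0.
Qed.

Lemma feasible_dir_sum X (I : Type) (r : seq I) (P : pred I) (F : I -> 'M[R]_n) :
  SM Ms X -> (forall i, P i -> feasible_dir X (F i)) ->
  feasible_dir X (\sum_(i <- r | P i) F i).
Proof.
move=> SX XF; apply: big_ind => //; [exact: feasible_dir0 | exact: feasible_dirD].
Qed.

Lemma feasible_dir_summand X Y W a E : SM Ms W -> 0 < a -> X = a *: Y + W ->
  feasible_dir Y E -> feasible_dir X E.
Proof.
move=> SW a_gt0 -> [e e_gt0 YE]; exists (a * e) => [|t t_le]; first exact: mulr_gt0.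
have -> : a *: Y + W + t *: E = a *: (Y + (t / a) *: E) + W.
  by apply/matrixP => i j; rewrite !mxE; field; rewrite gt_eqF.
apply: SMD => //; apply: SMZ; first exact: ltW.
by apply: YE; rewrite normrM normfV (gtr0_norm a_gt0) ler_pdivrMr // mulrC.
Qed.

Definition indep_dirs (k : nat) X := exists A : 'M[R]_(k, n * n),
  row_free A /\ forall i, feasible_dir X (vec_mx (row i A)).

Lemma indep_dirs0 X : indep_dirs 0 X.
Proof. by exists 0; split=> [|[]//]; rewrite /row_free mxrank0. Qed.

Lemma indep_dirs_le k X : indep_dirs k X -> (k <= n * n)%N.
Proof. by case=> A [/eqP k_eq _]; rewrite -k_eq rank_leq_col. Qed.

Lemma indep_dirsS X Y D k : SM Ms Y -> (forall E, feasible_dir Y E -> feasible_dir X E) ->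
  feasible_dir X D -> ~ feasible_dir Y D -> indep_dirs k Y -> indep_dirs k.+1 X.
Proof.
move=> SY YX XD not_YD [A [freeA YA]].
have D_notin_A : ~~ (mxvec D <= A)%MS.
  apply/negP => /submxP [u Du]; apply: not_YD.
  rewrite -(mxvecK D) Du mulmx_sum_row linear_sum /=.
  by apply: feasible_dir_sum => // i _; rewrite linearZ /=; apply: feasible_dirZ.
exists (col_mx (mxvec D) A); split.
  have ltA : (A < mxvec D + A)%MS by rewrite ltmxE addsmxSr addsmx_sub negb_and D_notin_A.
  by rewrite -row_leq_rank; have := rank_ltmx ltA; rewrite addsmxE (eqP freeA).
change (forall i : 'I_(1 + k), feasible_dir X (vec_mx (row i (col_mx (mxvec D) A)))).
move=> i; rewrite -(splitK i); case: (split i) => j /=.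
  by rewrite rowKu row_id mxvecK.
by rewrite rowKd; apply: YX.
Qed.

Lemma indep_dirs_summand X Y W a D : SM Ms Y -> SM Ms W -> 0 < a -> X = a *: Y + W ->
  feasible_dir X D -> ~ feasible_dir Y D ->
  forall k, indep_dirs k Y -> indep_dirs k.+1 X.
Proof.
move=> SY SW a_gt0 XE XD not_YD k; apply: (indep_dirsS (D := D)) => // E.
exact: (feasible_dir_summand SW a_gt0 XE).
Qed.

End FeasibleDirections.

Section RankOneSums.
Variables (R : realType) (n : nat) (Ms : 'M[R]_n -> Prop).
Implicit Types (X Y : 'M[R]_n) (x : 'cV[R]_n).

Definition rank1_sum X := exists (k : nat) (v : 'I_k -> 'cV[R]_n),
  (forall i, SM Ms (v i *m (v i)^T)) /\ X = \sum_i v i *m (v i)^T.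

Lemma rank1_sum0 : rank1_sum 0.
Proof. by exists 0%N, (fun _ => 0); split=> [[]//|]; rewrite big_ord0. Qed.

Lemma rank1_sum1 x : SM Ms (x *m x^T) -> rank1_sum (x *m x^T).
Proof. by exists 1%N, (fun _ => x); rewrite big_ord1. Qed.

Lemma rank1_sumD X Y : rank1_sum X -> rank1_sum Y -> rank1_sum (X + Y).
Proof.
case=> k1 [v1 [S1 ->]] [k2 [v2 [S2 ->]]].
exists (k1 + k2)%N, (fun i => match split i with inl a => v1 a | inr b => v2 b end).
split=> [i|]; first by case: (split i).
rewrite big_split_ord /=; congr (_ + _); apply: eq_bigr => i _.
  by rewrite (unsplitK (inl i)).
by rewrite (unsplitK (inr i)).
Qed.

Lemma rank1_sumZ c X : 0 <= c -> rank1_sum X -> rank1_sum (c *: X).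
Proof.
move=> c_ge0 [k [v [Sv ->]]]; exists k, (fun i => Num.sqrt c *: v i).
split=> [i|]; first by rewrite rank1Z sqr_sqrtr //; apply: SMZ.
by rewrite scaler_sumr; apply: eq_bigr => i _; rewrite rank1Z sqr_sqrtr.
Qed.

End RankOneSums.

Section Rays.
Variables (R : realType) (n : nat) (Ms : 'M[R]_n -> Prop).
Implicit Types (D X : 'M[R]_n).

Lemma sup_affine_ge0 (T : set R) (a b : R) : has_sup T ->
  (forall t, T t -> 0 <= a - t * b) -> 0 <= a - sup T * b.
Proof.
move=> supT affT; have [[t0 Tt0] _] := supT.
have t0_le := sup_upper_bound supT Tt0; have := affT _ Tt0.
have [b_le0 | b_gt0] := lerP b 0; first by nra.
have : sup T <= a / b.
  apply: ge_sup; first by exists t0.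
  move=> t Tt; rewrite ler_pdivlMr //; have := affT t Tt; lra.
by rewrite ler_pdivlMr //; lra.
Qed.

Lemma ray_last_point X D : SM Ms X -> sym_mx D ->
  (exists B, forall t, 0 <= t -> SM Ms (X + t *: D) -> t <= B) ->
  exists s, [/\ 0 <= s, SM Ms (X + s *: D) &
                forall e, 0 < e -> ~ SM Ms (X + (s + e) *: D)].
Proof.
move=> SX sD [B rayB]; pose T : set R := fun t => 0 <= t /\ SM Ms (X + t *: D).
have T0 : T 0 by split; rewrite // scale0r addr0.
have supT : has_sup T by split; [exists 0 | exists B => t []; exact: rayB].
have s_ge0 : 0 <= sup T by exact: sup_upper_bound.
exists (sup T); split=> // [|e e_gt0 Se]; last first.
  by have := sup_upper_bound supT (conj (addr_ge0 s_ge0 (ltW e_gt0)) Se); lra.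
have [[sX pX] iX] := SX; split; first split.
- by rewrite /sym_mx linearD linearZ /= sX sD.
- move=> v; rewrite qformD qformZ -[_ * _]opprK -mulrN.
  apply: sup_affine_ge0 => // t [_ [[_ pt] _]].
  by have := pt v; rewrite qformD qformZ mulrN opprK.
- move=> M HM; rewrite innerD innerZ -[_ * _]opprK -mulrN.
  apply: sup_affine_ge0 => // t [_ [_ it]].
  by have := it M HM; rewrite innerD innerZ mulrN opprK.
Qed.

Lemma ray_exit X D : SM Ms X -> sym_mx D -> feasible_dir Ms X D ->
  (exists B, forall t, 0 <= t -> SM Ms (X + t *: D) -> t <= B) ->
  exists2 s, 0 < s & SM Ms (X + s *: D) /\ ~ feasible_dir Ms (X + s *: D) D.
Proof.
move=> SX sD [e0 e0_gt0 XD] bounded.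
have [s [s_ge0 Ss s_max]] := ray_last_point SX sD bounded.
have e0_le : e0 <= s.
  rewrite leNgt; apply/negP => s_lt; apply: (s_max (e0 - s)); first by rewrite subr_gt0.
  by rewrite [s + _]addrC subrK; apply: XD; rewrite gtr0_norm.
exists s; first exact: lt_le_trans e0_le.
split=> // -[e e_gt0 YD]; apply: (s_max e e_gt0).
by rewrite scalerDl addrA; apply: YD; rewrite gtr0_norm.
Qed.

End Rays.

Section Splitting.
Variables (R : realType) (n : nat) (Ms : 'M[R]_n -> Prop).
Implicit Types (D X : 'M[R]_n) (x y : 'cV[R]_n).

Lemma psd_add_range_rank1 X y t : psd X -> `|t| * qform X y <= 1 ->
  psd (X + t *: ((X *m y) *m (X *m y)^T)).
Proof.
move=> psdX t_le; have [sX pX] := psdX; split=> [|v].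
  by rewrite /sym_mx linearD linearZ /= sX sym_rank1.
rewrite qformD qformZ qform_rank1 dot_mulmx //.
set b := bil X y v; set c := qform X v.
have tb_ge : - (`|t| * b ^+ 2) <= t * b ^+ 2.
  by rewrite -mulNr ler_wpM2r ?sqr_ge0 // lerNl -normrN ler_norm.
have : `|t| * b ^+ 2 <= `|t| * qform X y * c.
  by rewrite -mulrA ler_wpM2l ?psd_cauchy_schwarz.
have : `|t| * qform X y * c <= c by rewrite ler_piMl ?pX.
lra.
Qed.

Lemma feasible_dir_rank1 X x : SM Ms X -> in_range X x -> EM X Ms x ->
  feasible_dir Ms X (x *m x^T).
Proof.
move=> [psdX iX] [y ->] EXx; have qXy := psdX.2 y.
exists (1 + qform X y)^-1 => [|t]; first by rewrite invr_gt0; lra.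
rewrite -[(1 + _)^-1]mul1r ler_pdivlMr; last by lra.
move=> t_le; have t_ge := normr_ge0 t; split=> [|M HM].
  by apply: psd_add_range_rank1 => //; apply: le_trans t_le; rewrite ler_wpM2l // lerDr.
rewrite innerD innerZ inner_rank1; have := EXx M HM.
have := ler_norm (- (t * qform M (X *m y))); rewrite normrN normrM.
have := normr_ge0 (qform M (X *m y)); nra.
Qed.

Lemma rank1_split X x : SM Ms X -> x != 0 -> in_range X x -> EM X Ms x ->
  exists Y Z, [/\ SM Ms Y, SM Ms Z,
    forall k, indep_dirs Ms k Y -> indep_dirs Ms k.+1 X,
    forall k, indep_dirs Ms k Z -> indep_dirs Ms k.+1 X &
    rank1_sum Ms Y -> rank1_sum Ms Z -> rank1_sum Ms X].
Proof.
move=> SX x_neq0 Xx EXx; set D := x *m x^T.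
have XD : feasible_dir Ms X D by exact: feasible_dir_rank1.
have XND : feasible_dir Ms X (- D) by rewrite -scaleN1r; exact: feasible_dirZ.
have sND : sym_mx (- D) by rewrite /sym_mx linearN /= sym_rank1.
have [s1 s1_gt0 [SY not_YND]] : exists2 s, 0 < s &
    SM Ms (X + s *: - D) /\ ~ feasible_dir Ms (X + s *: - D) (- D).
  apply: ray_exit => //; exists (qform X x / dot x x ^+ 2) => t _ [[_ pt] _].
  have := pt x; rewrite qformD qformZ qformN qform_rank1 => qx.
  by rewrite ler_pdivlMr ?exprn_gt0 ?dot_gt0 //; lra.
set Y := X + s1 *: - D.
have [SD | not_SD] := pselect (SM Ms D).
  have XE : X = 1 *: Y + s1 *: D by rewrite /Y scale1r scalerN subrK.
  have lowY := indep_dirs_summand SY (SMZ (ltW s1_gt0) SD) ltr01 XE XND not_YND.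
  exists Y, Y; split=> // RY _; rewrite XE scale1r.
  by apply: rank1_sumD RY (rank1_sumZ (ltW s1_gt0) (rank1_sum1 SD)).
have [M0 M0_in M0D] : exists2 M, Ms M & inner M D < 0.
  apply: contrapT => no_M; apply: not_SD; split=> [|M HM]; first exact: psd_rank1.
  by rewrite leNgt; apply/negP => MD; apply: no_M; exists M.
have [s2 s2_gt0 [SZ not_ZD]] : exists2 s, 0 < s &
    SM Ms (X + s *: D) /\ ~ feasible_dir Ms (X + s *: D) D.
  apply: ray_exit => //; first exact: sym_rank1.
  exists (inner M0 X / - inner M0 D) => t _ [_ it].
  have := it M0 M0_in; rewrite innerD innerZ => iXt.
  by rewrite ler_pdivlMr ?oppr_gt0 //; nra.
set Z := X + s2 *: D.
have s_gt0 : 0 < s1 + s2 by lra.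
have a_gt0 : 0 < s2 / (s1 + s2) by rewrite divr_gt0.
have b_gt0 : 0 < s1 / (s1 + s2) by rewrite divr_gt0.
have XE : X = (s2 / (s1 + s2)) *: Y + (s1 / (s1 + s2)) *: Z.
  by apply/matrixP => i j; rewrite !mxE; field; rewrite gt_eqF.
exists Y, Z; split=> //.
- exact: (indep_dirs_summand SY (SMZ (ltW b_gt0) SZ) a_gt0 XE XND not_YND).
- rewrite addrC in XE.
  exact: (indep_dirs_summand SZ (SMZ (ltW a_gt0) SY) b_gt0 XE XD not_ZD).
- by move=> RY RZ; rewrite XE; apply: rank1_sumD; apply: rank1_sumZ => //; apply: ltW.
Qed.

Lemma rank1_sum_of_range_EM :
  (forall X, SM Ms X -> X != 0 -> exists x, x != 0 /\ in_range X x /\ EM X Ms x) ->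
  forall X, SM Ms X -> rank1_sum Ms X.
Proof.
move=> split_cond X SX.
suff : forall m X, SM Ms X -> (forall k, indep_dirs Ms k X -> (k <= m)%N) -> rank1_sum Ms X.
  by apply=> // k; exact: indep_dirs_le.
elim=> [|m IHm] {}X {}SX dimX; have [-> | X_neq0] := eqVneq X 0; try exact: rank1_sum0;
  have [x [x_neq0 [Xx EXx]]] := split_cond X SX X_neq0;
  have [Y [Z [SY SZ lowY lowZ sumX]]] := rank1_split SX x_neq0 Xx EXx.
  by have := dimX _ (lowY _ (indep_dirs0 Ms Y)).
by apply: sumX; [apply: IHm SY _ | apply: IHm SZ _] => k; [move/lowY | move/lowZ] => /dimX.
Qed.

End Splitting.

Section ConvexHull.
Variables (R : realType) (n : nat) (Ms : 'M[R]_n -> Prop).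
Implicit Types (W X : 'M[R]_n) (x : 'cV[R]_n).

Lemma dot_eq0 x : (dot x x == 0) = (x == 0).
Proof.
apply/eqP/eqP => [|->]; last by rewrite /dot mulmx0 mxE.
by apply: contra_eq => /dot_gt0 /lt0r_neq0.
Qed.

Lemma in_range_rank1_summand x W : psd W -> in_range (x *m x^T + W) x.
Proof.
move=> [sW pW]; set X := x *m x^T + W; set K := cokermx X.
have sX : sym_mx X by rewrite /sym_mx linearD /= sym_rank1 sW.
(* with [v := K^T x], the kernel vector [K v] of [X] gives [0 = x^T K v = |v|^2] *)
have v0 : K^T *m x = 0.
  apply/eqP; rewrite -dot_eq0; set v := K^T *m x.
  have XKv : X *m (K *m v) = 0 by rewrite mulmxA mulmx_coker mul0mx.
  have : qform X (K *m v) = 0 by rewrite /qform -mulmxA XKv mulmx0 mxE.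
  rewrite qformD qform_rank1 /dot trmx_mul trmxK mulmxA => /eqP.
  by rewrite paddr_eq0 ?sqr_ge0 // sqrf_eq0 => /andP [].
have : (x^T <= X)%MS by rewrite submxE -[x^T *m K]trmxK trmx_mul trmxK v0 trmx0.
by case/submxP => u xE; exists u^T; rewrite -[x]trmxK xE trmx_mul sX.
Qed.

Lemma EM_rank1_summand x W : SM Ms (x *m x^T) -> SM Ms W -> EM (x *m x^T + W) Ms x.
Proof.
move=> [_ ix] [_ iW] M HM; rewrite innerD -inner_rank1 ger0_norm ?ix //.
by rewrite lerDl iW.
Qed.

Lemma range_EM_of_conv X : X != 0 ->
  conv (fun Y => SM Ms Y /\ rank_one Y) X ->
  exists x, x != 0 /\ in_range X x /\ EM X Ms x.
Proof.
move=> X_neq0 [k [lam [Y [lam_ge0 [_ [SY XE]]]]]]; rewrite XE in X_neq0 *.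
have [i] : exists i, lam i *: Y i != 0.
  apply/existsP; apply: contraR X_neq0 => /existsPn Y0.
  by apply/eqP; apply: big1 => i _; apply/eqP/negPn/Y0.
have [SYi [y Yi]] := SY i; set x := Num.sqrt (lam i) *: y.
have xxE : lam i *: Y i = x *m x^T by rewrite Yi rank1Z sqr_sqrtr.
rewrite xxE => xx_neq0.
have Sxx : SM Ms (x *m x^T) by rewrite -xxE; exact: SMZ (lam_ge0 i) SYi.
set W := \sum_(j | j != i) lam j *: Y j.
have SW : SM Ms W by apply: SM_sum => j _; exact: SMZ (lam_ge0 j) (SY j).1.
rewrite (bigD1 i) //= xxE -/W; exists x; split.
  by apply: contraNneq xx_neq0 => ->; rewrite mul0mx.
by split; [exact: in_range_rank1_summand SW.1 | exact: EM_rank1_summand].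
Qed.

Lemma conv_of_rank1_sum X : rank1_sum Ms X -> conv (fun Y => SM Ms Y /\ rank_one Y) X.
Proof.
case=> [[|k]] [v [Sv ->]].
  exists 1%N, (fun=> 1), (fun=> 0); rewrite !big_ord1 big_ord0 scaler0.
  split=> //; split=> //; split=> // _.
  by split; [exact: SM0 | exists 0; rewrite mul0mx].
have k_gt0 : 0 < k.+1%:R :> R by rewrite ltr0n.
exists k.+1, (fun=> k.+1%:R^-1), (fun i => k.+1%:R *: (v i *m (v i)^T)).
split=> [i|]; first by rewrite invr_ge0 ltW.
split; first by rewrite sumr_const card_ord -[LHS]mulr_natr mulVf ?gt_eqF.
split=> [i|]; last by apply: eq_bigr => i _; rewrite scalerA mulVf ?gt_eqF // scale1r.
split; first by apply: SMZ; rewrite ?ltW.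
by exists (Num.sqrt k.+1%:R *: v i); rewrite rank1Z sqr_sqrtr // ltW.
Qed.

Lemma SM_of_conv X : conv (fun Y => SM Ms Y /\ rank_one Y) X -> SM Ms X.
Proof.
case=> k [lam [Y [lam_ge0 [_ [SY ->]]]]].
by apply: SM_sum => i _; exact: SMZ (lam_ge0 i) (SY i).1.
Qed.

End ConvexHull.

Theorem lemma2p23 (R : realType) (n : nat) (Ms : 'M[R]_n -> Prop)
  (HMs : forall M, Ms M -> sym_mx M) :
  ROG (SM Ms) <->
  (forall X : 'M[R]_n, SM Ms X -> X != 0 ->
     exists x : 'cV[R]_n, x != 0 /\ in_range X x /\ EM X Ms x).
Proof.
split=> [rog X SX X_neq0 | split_cond X].
  by apply: range_EM_of_conv X_neq0 _; apply/rog.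
split=> [SX | /SM_of_conv //].
by apply/conv_of_rank1_sum/rank1_sum_of_range_EM.
Qed.
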